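(* Let $M$ be a right $R$-module such that for every cyclic submodule $X$ of $M$ there is a decomposition $M=D\oplus D'$ in which $D'$ is a supplement of $X$ in $M$ and $D$ is $D'$-projective. Then $M$ is principally Goldie*-lifting.
   Context: $R$ is an associative ring with identity; modules are unital right $R$-modules. $K\ll N$ means $K$ is small in $N$. A submodule $S$ is a supplement of $X$ in $M$ if $X+S=M$ and $X\cap S\ll S$. A module $A$ is $B$-projective if every homomorphism $A\to B/C$ ($C\le B$) lifts to a homomorphism $A\to B$. For submodules $X,Y$ of $M$, $X\,\beta^*\,Y$ means $(X+Y)/X\ll M/X$ and $(X+Y)/Y\ll M/Y$. $M$ is principally Goldie*-lifting if for every cyclic submodule $X$ of $M$ there is a direct summand $D$ of $M$ with $X\,\beta^*\,D$. *)

From HB Require Import structures.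
From mathcomp Require Import all_boot all_order all_algebra.
Set Implicit Arguments. Unset Strict Implicit. Unset Printing Implicit Defensive.
Import GRing.Theory.
Local Open Scope ring_scope.

Section RightModules.
Variables (R : pzRingType) (M : zmodType) (act : M -> R -> M).

Definition right_module : Prop :=
  [/\ (forall (x y : M) r, act (x + y) r = act x r + act y r),
      (forall (x : M) r s, act x (r + s) = act x r + act x s),
      (forall (x : M) r s, act x (r * s) = act (act x r) s)
    & (forall x : M, act x 1 = x)].

Definition submodule (X : M -> Prop) : Prop :=
  [/\ X 0,
      (forall x y, X x -> X y -> X (x + y)),
      (forall x, X x -> X (- x))
    & (forall x r, X x -> X (act x r))].

Definition subm (X Y : M -> Prop) : Prop := forall x, X x -> Y x.
Definition eqm (X Y : M -> Prop) : Prop := forall x, X x <-> Y x.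
Definition fullm : M -> Prop := fun _ => True.
Definition zerom : M -> Prop := fun x => x = 0.
Definition summ (X Y : M -> Prop) : M -> Prop :=
  fun z => exists x y, [/\ X x, Y y & z = x + y].
Definition capm (X Y : M -> Prop) : M -> Prop := fun z => X z /\ Y z.

Definition cyclicm (x : M) : M -> Prop := fun z => exists r, z = act x r.

Definition small (K N : M -> Prop) : Prop :=
  forall L, submodule L -> subm L N -> eqm (summ K L) N -> eqm L N.

(* K/X << M/X, for submodules X <= K of M, via the correspondence between
   submodules of M/X and submodules of M containing X *)
Definition small_quot (K X : M -> Prop) : Prop :=
  forall L, submodule L -> subm X L -> eqm (summ K L) fullm -> eqm L fullm.

Definition direct_decomp (D D' : M -> Prop) : Prop :=
  [/\ submodule D, submodule D', eqm (summ D D') fullm & eqm (capm D D') zerom].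

Definition direct_summand (D : M -> Prop) : Prop :=
  exists D', direct_decomp D D'.

Definition supplement (S X : M -> Prop) : Prop :=
  [/\ submodule S, eqm (summ X S) fullm & small (capm X S) S].

(* A homomorphism A -> B/C (C <= B a submodule) is represented by a
   function g : M -> M whose values on A lie in B and which is additive and
   R-linear on A modulo C (a choice of representatives); it lifts if there
   is an R-linear h : A -> B (represented as h : M -> M, only its values on A
   matter) with h a - g a in C for all a in A. *)
Definition rel_projective (A B : M -> Prop) : Prop :=
  forall (C : M -> Prop) (g : M -> M),
    submodule C -> subm C B ->
    (forall a, A a -> B (g a)) ->
    (forall a b, A a -> A b -> C (g (a + b) - (g a + g b))) ->
    (forall a r, A a -> C (g (act a r) - act (g a) r)) ->
    exists h : M -> M,
      [/\ (forall a, A a -> B (h a)),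
          (forall a b, A a -> A b -> h (a + b) = h a + h b),
          (forall a r, A a -> h (act a r) = act (h a) r)
        & (forall a, A a -> C (h a - g a))].

Definition beta_star (X Y : M -> Prop) : Prop :=
  small_quot (summ X Y) X /\ small_quot (summ X Y) Y.

Definition principally_goldie_star_lifting : Prop :=
  forall x : M, exists D, direct_summand D /\ beta_star (cyclicm x) D.

End RightModules.

From HB Require Import structures.
From mathcomp Require Import all_boot all_order all_algebra.
From Stdlib Require Import ClassicalEpsilon.
Set Implicit Arguments. Unset Strict Implicit. Unset Printing Implicit Defensive.
Import GRing.Theory.
Local Open Scope ring_scope.

(* Take M = D (+) D' with D' a supplement of X = xR and D D'-projective.  The
   map D -> M/X = (X + D')/X ~ D'/(X cap D') lifts to h : D -> D', so that
   a + h a lies in X for every a in D.  The graph A = {a + h a | a in D} is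
   again a complement of D', and A <= X.  Hence (X + A)/X = 0, while
   (X + A)/A = X/A is small in M/A: a submodule L >= A with X + L = M meets
   D' in a submodule that, together with X cap D' << D', spans D'; so
   D' <= L and L = A + D' = M. *)

Section RightModuleFacts.
Variables (R : pzRingType) (M : zmodType) (act : M -> R -> M).

Lemma submoduleB X x y : submodule act X -> X x -> X y -> X (x - y).
Proof. by case=> _ XD XN _ Xx Xy; apply: XD => //; apply: XN. Qed.

Lemma capm_submodule X Y :
  submodule act X -> submodule act Y -> submodule act (capm X Y).
Proof.
case=> X0 XD XN XA [Y0 YD YN YA]; split=> //.
- by move=> x y [? ?] [? ?]; split; auto.
- by move=> x [? ?]; split; auto.
- by move=> x r [? ?]; split; auto.
Qed.

Lemma summ_idPl X Y : submodule act X -> subm Y X -> subm (summ X Y) X.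
Proof. by case=> _ XD _ _ YX _ [x [y [Xx Yy ->]]]; apply: XD => //; apply: YX. Qed.

Lemma small_quot_sub K X : subm K X -> small_quot act K X.
Proof.
move=> KX L [_ LD _ _] XL KL m; split=> // _.
by have [_ /(_ I) [k [l [Kk Ll ->]]]] := KL m; apply: LD => //; apply/XL/KX.
Qed.

Lemma small_quotSl K K' X : subm K K' -> small_quot act K' X -> small_quot act K X.
Proof.
move=> KK' smallK' L sL XL KL; apply: smallK' => // m; split=> // _.
by have [_ /(_ I) [k [l [Kk Ll ->]]]] := KL m; exists k, l; split=> //; apply: KK'.
Qed.

Lemma small_quot_supplement X A D' :
  submodule act X -> subm A X -> direct_decomp act A D' ->
  supplement act D' X -> small_quot act X A.
Proof.
move=> sX AX [_ sD' AD' _] [_ _ smallXD'] L sL AL XL.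
have [_ LD _ _] := sL; have [_ D'D _ _] := sD'.
have D'L : subm D' L.
  suff D'eq : eqm (summ (capm X D') (capm L D')) D'.
    move=> m D'm.
    by have [_ /(_ D'm) []] := smallXD' _ (capm_submodule sL sD') (fun _ p => p.2) D'eq m.
  move=> m; split; first by case=> [c [l [[_ D'c] [_ D'l] ->]]]; apply: D'D.
  move=> D'm; have [_ /(_ I) [x [l [Xx Ll em]]]] := XL m.
  have [_ /(_ I) [a [d [Aa D'd ex]]]] := AD' x.
  subst m x.
  exists d, (a + l); split; last by rewrite addrCA addrA.
  - split=> //; have -> : d = a + d - a by rewrite addrC addKr.
    exact: submoduleB sX Xx (AX a Aa).
  - split; first by apply: LD => //; apply: AL.
    have -> : a + l = a + d + l - d by rewrite addrAC addrK.
    exact: submoduleB sD' D'm D'd.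
move=> m; split=> // _.
by have [_ /(_ I) [a [d [Aa D'd ->]]]] := AD' m; apply: LD; [apply: AL | apply: D'L].
Qed.

Hypothesis rm : right_module act.

Lemma act0r x : act x 0 = 0.
Proof. by have [_ actDr _ _] := rm; apply: (@addrI _ (act x 0)); rewrite -actDr !addr0. Qed.

Lemma actNr x r : act x (- r) = - act x r.
Proof.
have [_ actDr _ _] := rm.
by apply: (@addrI _ (act x r)); rewrite -actDr !subrr act0r.
Qed.

Lemma cyclicm_submodule x : submodule act (cyclicm act x).
Proof.
have [_ actDr actMr _] := rm; split.
- by exists 0; rewrite act0r.
- by move=> _ _ [r ->] [s ->]; exists (r + s); rewrite actDr.
- by move=> _ [r ->]; exists (- r); rewrite actNr.
- by move=> _ s [r ->]; exists (r * s); rewrite actMr.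
Qed.

Section Graph.
Variables (D : M -> Prop) (h : M -> M).
Hypothesis sD : submodule act D.
Hypothesis h_add : forall a b, D a -> D b -> h (a + b) = h a + h b.
Hypothesis h_act : forall a r, D a -> h (act a r) = act (h a) r.

Definition graphm : M -> Prop := fun m => exists a, D a /\ m = a + h a.

Lemma additive_on0 : h 0 = 0.
Proof. by have [D0 _ _ _] := sD; apply: (@addrI _ (h 0)); rewrite -h_add // !addr0. Qed.

Lemma additive_onN a : D a -> h (- a) = - h a.
Proof.
have [_ _ DN _] := sD => Da.
by apply: (@addrI _ (h a)); rewrite -h_add ?subrr ?additive_on0 //; apply: DN.
Qed.

Lemma graphm_submodule : submodule act graphm.
Proof.
have [D0 DD DN DA] := sD; have [actDl _ _ _] := rm; split.
- by exists 0; rewrite additive_on0 addr0.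
- move=> _ _ [a [Da ->]] [b [Db ->]]; exists (a + b).
  by rewrite h_add // addrACA; split=> //; apply: DD.
- by move=> _ [a [Da ->]]; exists (- a); rewrite additive_onN // opprD; split=> //; apply: DN.
- by move=> _ r [a [Da ->]]; exists (act a r); rewrite h_act // actDl; split=> //; apply: DA.
Qed.

Lemma graphm_direct_decomp D' :
  (forall a, D a -> D' (h a)) -> direct_decomp act D D' -> direct_decomp act graphm D'.
Proof.
move=> hD' [_ sD' DD' DcapD']; split=> //; first exact: graphm_submodule.
- move=> m; split=> // _; have [_ /(_ I) [a [d [Da D'd ->]]]] := DD' m.
  exists (a + h a), (d - h a); split; first by exists a.
  + by apply: submoduleB => //; apply: hD'.
  + by rewrite addrACA subrr addr0.
- have [D'0 _ _ _] := sD'; have [D0 _ _ _] := sD.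
  move=> m; split; last by move=> ->; split=> //; exists 0; rewrite additive_on0 addr0.
  case=> [[a [Da ->]] D'm].
  have D'a : D' a by rewrite -(addrK (h a) a); apply: submoduleB => //; apply: hD'.
  have -> : a = 0 by apply: (DcapD' a).1.
  by rewrite /zerom additive_on0 addr0.
Qed.
End Graph.

Lemma rel_projective_graph_sub (X D D' : M -> Prop) :
  submodule act X -> submodule act D' -> eqm (summ X D') (@fullm M) ->
  rel_projective act D D' ->
  exists h : M -> M,
    [/\ forall a, D a -> D' (h a),
        forall a b, D a -> D b -> h (a + b) = h a + h b,
        forall a r, D a -> h (act a r) = act (h a) r
      & forall a, D a -> X (a + h a)].
Proof.
move=> sX sD' XD' projD; have [_ XD _ XA] := sX; have [actDl _ _ _] := rm.
have decomp m : {x | X x /\ D' (m - x)}.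
  apply: constructive_indefinite_description.
  have [_ /(_ I) [x [d [Xx D'd ->]]]] := XD' m.
  by exists x; rewrite addrC addKr.
pose g m := sval (decomp m) - m.
have gD' m : D' (g m).
  by rewrite /g -opprB; have [_ _ D'N _] := sD'; apply: D'N; case: (svalP (decomp m)).
have gX m : X (g m + m) by rewrite /g subrK; case: (svalP (decomp m)).
clearbody g.
have subrDr (x y z : M) : x - y = (x + z) - (y + z) by rewrite (addrC y) addrKA.
have [_ D'D _ D'A] := sD'.
have g_add a b : D a -> D b -> capm X D' (g (a + b) - (g a + g b)).
  move=> _ _; split; last exact: submoduleB sD' (gD' _) (D'D _ _ (gD' a) (gD' b)).
  rewrite (subrDr _ _ (a + b)) -addrACA.
  exact: submoduleB sX (gX _) (XD _ _ (gX a) (gX b)).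
have g_act a r : D a -> capm X D' (g (act a r) - act (g a) r).
  move=> _; split; last exact: submoduleB sD' (gD' _) (D'A _ r (gD' a)).
  rewrite (subrDr _ _ (act a r)) -actDl.
  exact: submoduleB sX (gX _) (XA _ r (gX a)).
have [h [hD' h_add h_act hg]] := projD (capm X D') g (capm_submodule sX sD')
  (fun _ p => p.2) (fun a _ => gD' a) g_add g_act.
exists h; split=> // a Da; have [Xhg _] := hg a Da.
by rewrite addrC -(subrKA (g a)); apply: XD.
Qed.

End RightModuleFacts.

Theorem proposition3p9 (R : pzRingType) (M : zmodType) (act : M -> R -> M) :
  right_module act ->
  (forall x : M, exists D D' : M -> Prop,
      [/\ direct_decomp act D D',
          supplement act D' (cyclicm act x)
        & rel_projective act D D']) ->
  principally_goldie_star_lifting act.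
Proof.
move=> rm hyp x; have [D [D' [DD' suppD' projD]]] := hyp x.
have [sD sD' _ _] := DD'; have [_ XD' _] := suppD'.
have sX := cyclicm_submodule rm x.
have [h [hD' h_add h_act hX]] := rel_projective_graph_sub rm sX sD' XD' projD.
have AD' := graphm_direct_decomp rm sD h_add h_act hD' DD'.
have AX : subm (graphm D h) (cyclicm act x) by move=> _ [a [Da ->]]; apply: hX.
have XAX := summ_idPl sX AX.
exists (graphm D h); split; first by exists D'.
split; first exact: small_quot_sub.
exact: small_quotSl XAX (small_quot_supplement sX AX AD' suppD').
Qed.
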